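(* Let $G=(V,E)$ be a strongly biconnected directed graph and let $U\subseteq E$ be such that the directed subgraph $G_1=(V,U)$ is strongly connected but the underlying undirected graph of $G_1$ is not biconnected. Let $(v,w)\in E\setminus U$ be an edge such that $v$ and $w$ are not in the same strongly biconnected component of $G_1$. Then the directed subgraph $(V,U\cup\{(v,w)\})$ has fewer strongly biconnected components than $G_1$.
   Context: A directed graph is strongly biconnected if it is strongly connected and its underlying undirected graph (obtained by ignoring edge directions) is biconnected. A strongly biconnected component of a directed graph is a maximal strongly biconnected subgraph of it (in the sense of Wu and Grumbach); two vertices are in the same strongly biconnected component if some strongly biconnected component contains both. *)

(* Finite directed graphs on a finType T; an edge set is a
   {set T * T}.  A (directed) subgraph is a pair (S, F) of a vertex set S and
   an edge set F whose edges have both endpoints in S. *)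
From mathcomp Require Import all_boot.
Set Implicit Arguments. Unset Strict Implicit. Unset Printing Implicit Defensive.

Section Digraphs.
Variable T : finType.

Definition darc (S : {set T}) (F : {set T * T}) : rel T :=
  fun x y => [&& x \in S, y \in S & (x, y) \in F].

Definition uarc (S : {set T}) (F : {set T * T}) : rel T :=
  fun x y => darc S F x y || darc S F y x.

Definition is_subgraph (E : {set T * T}) (S : {set T}) (F : {set T * T}) : bool :=
  (F \subset E) && [forall e in F, (e.1 \in S) && (e.2 \in S)].

Definition strongly_connected (S : {set T}) (F : {set T * T}) : bool :=
  [forall x in S, forall y in S, connect (darc S F) x y].

Definition uconnected (S : {set T}) (F : {set T * T}) : bool :=
  [forall x in S, forall y in S, connect (uarc S F) x y].

Definition biconnected (S : {set T}) (F : {set T * T}) : bool :=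
  [&& S != set0, uconnected S F & [forall z in S, uconnected (S :\ z) F]].

Definition strongly_biconnected (S : {set T}) (F : {set T * T}) : bool :=
  strongly_connected S F && biconnected S F.

Definition is_sbc (E : {set T * T}) (p : {set T} * {set T * T}) : bool :=
  [&& is_subgraph E p.1 p.2, strongly_biconnected p.1 p.2 &
      [forall S' : {set T}, forall F' : {set T * T},
        [&& is_subgraph E S' F', strongly_biconnected S' F',
            p.1 \subset S' & p.2 \subset F'] ==> ((S', F') == p)]].

Definition sbcs (E : {set T * T}) : {set {set T} * {set T * T}} :=
  [set p | is_sbc E p].

Definition same_sbc (E : {set T * T}) (v w : T) : bool :=
  [exists p in sbcs E, (v \in p.1) && (w \in p.1)].

End Digraphs.

(* A simple path w -> ... -> v in U closes up with the new edge (v, w) to a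
   simple directed cycle C, and a simple cycle is strongly biconnected.  The
   first and last edges of the path lie in components K1 (containing w) and K2
   (containing v) of U; they are distinct, since no component of U contains
   both v and w.  Two strongly biconnected subgraphs sharing two vertices have a
   strongly biconnected union, so in U + (v, w) both K1 and K2 merge with C and
   cease to be components.  Any other component of U + (v, w) either avoids
   (v, w), and then is already a component of U, or is the unique component
   containing (v, w): at least two components are lost and at most one is
   created. *)

From mathcomp Require Import all_boot zify.
Set Implicit Arguments. Unset Strict Implicit. Unset Printing Implicit Defensive.

Section Paths.
Variable T : eqType.

Lemma cycle_rot_to (e : rel T) c x : cycle e c -> x \in c ->
  exists s, [/\ path e x s, c =i x :: s & uniq c = uniq (x :: s)].
Proof.
move=> ec /rot_to[i s rot_c]; exists s.
have := ec; rewrite -(rot_cycle i) rot_c /= rcons_path => /andP[exs _].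
split=> // [y|]; first by rewrite -(mem_rot i) rot_c.
by rewrite -(rot_uniq i) rot_c.
Qed.

Lemma uniq_path_rcons_ends (e : rel T) x p y :
  path e x (rcons p y) -> uniq (x :: rcons p y) ->
  [/\ e x (head y p), x != head y p, e (last x p) y & last x p != y].
Proof.
move=> exp up; have /andP[xNp _] := up.
move: up; rewrite -rcons_cons rcons_uniq => /andP[yNxp _].
move: exp; rewrite rcons_path => /andP[exp ely]; split=> //.
- by case: p exp ely {xNp yNxp} => //= z p /andP[].
- by apply: contraNneq xNp => ->; case: (p) => [|z q]; rewrite /= inE eqxx.
- by apply: contraNneq yNxp => <-; apply: mem_last.
Qed.

End Paths.

Section Digraphs.
Variable T : finType.
Implicit Types (S : {set T}) (F E : {set T * T}).

Lemma connect_uniq_path (e : rel T) x y : connect e x y ->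
  exists p, [/\ path e x p, uniq (x :: p) & last x p = y].
Proof. by case/connectP=> p /shortenP[p' ep' up' _] ->; exists p'. Qed.

Lemma connect_uniq_path_rcons (e : rel T) x y : x != y -> connect e x y ->
  exists p, path e x (rcons p y) /\ uniq (x :: rcons p y).
Proof.
move=> xy /connect_uniq_path[p [ep up]]; case/lastP: p ep up => [_ _ /eqP|p z ep up].
  by rewrite (negbTE xy).
by rewrite last_rcons => zy; exists p; rewrite -zy.
Qed.

Lemma darcT F x y : darc setT F x y = ((x, y) \in F).
Proof. by rewrite /darc !inE. Qed.

Lemma darcS S S' F F' : S \subset S' -> F \subset F' -> subrel (darc S F) (darc S' F').
Proof.
move=> sS sF x y /and3P[xS yS xyF].
by rewrite /darc (subsetP sS x xS) (subsetP sS y yS) (subsetP sF _ xyF).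
Qed.

Lemma connect_darcS S S' F F' : S \subset S' -> F \subset F' ->
  subrel (connect (darc S F)) (connect (darc S' F')).
Proof. by move=> sS sF; apply: connect_sub => x y /(darcS sS sF)/connect1. Qed.

Lemma connect_uarcS S S' F F' : S \subset S' -> F \subset F' ->
  subrel (connect (uarc S F)) (connect (uarc S' F')).
Proof.
move=> sS sF; apply: connect_sub => x y /orP[] /(darcS sS sF) xy;
by apply: connect1; rewrite /uarc xy ?orbT.
Qed.

Lemma connect_uarc_sym S F : connect_sym (uarc S F).
Proof. by apply: sym_connect_sym => x y; rewrite /uarc orbC. Qed.

Lemma connect_darc_uarc S F : subrel (connect (darc S F)) (connect (uarc S F)).
Proof. by apply: connect_sub => x y xy; apply: connect1; rewrite /uarc xy. Qed.

Lemma strongly_connectedP S F :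
  reflect {in S &, forall x y, connect (darc S F) x y} (strongly_connected S F).
Proof.
apply: (iffP forall_inP) => [h x y xS yS | h x xS].
  by move/forall_inP: (h x xS); apply.
by apply/forall_inP => y yS; apply: h.
Qed.

Lemma uconnectedP S F :
  reflect {in S &, forall x y, connect (uarc S F) x y} (uconnected S F).
Proof.
apply: (iffP forall_inP) => [h x y xS yS | h x xS].
  by move/forall_inP: (h x xS); apply.
by apply/forall_inP => y yS; apply: h.
Qed.

Lemma strongly_connected_hub S F c :
  {in S, forall x, connect (darc S F) x c && connect (darc S F) c x} ->
  strongly_connected S F.
Proof.
move=> h; apply/strongly_connectedP => x y /h/andP[xc _] /h/andP[_ cy].
exact: connect_trans xc cy.
Qed.

Lemma uconnected_hub S F c :
  {in S, forall x, connect (uarc S F) c x} -> uconnected S F.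
Proof.
move=> h; apply/uconnectedP => x y /h cx /h cy.
by apply: connect_trans cy; rewrite connect_uarc_sym.
Qed.

Lemma strongly_connected_uconnected S F :
  strongly_connected S F -> uconnected S F.
Proof.
move/strongly_connectedP=> h; apply/uconnectedP => x y xS yS.
exact/connect_darc_uarc/h.
Qed.

Lemma biconnected_uconnectedD1 S F z : biconnected S F -> uconnected (S :\ z) F.
Proof.
case/and3P=> _ ucS /forall_inP ucSD1; have [/ucSD1 // | zNS] := boolP (z \in S).
by rewrite (setDidPl _) // disjoint_sym disjoints1.
Qed.

Lemma strongly_connectedU S1 S2 F1 F2 a : a \in S1 -> a \in S2 ->
  strongly_connected S1 F1 -> strongly_connected S2 F2 ->
  strongly_connected (S1 :|: S2) (F1 :|: F2).
Proof.
move=> aS1 aS2 /strongly_connectedP sc1 /strongly_connectedP sc2.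
apply: (strongly_connected_hub (c := a)) => x; rewrite inE => /orP[xS | xS].
  by rewrite !(connect_darcS (subsetUl _ _) (subsetUl _ _)) ?sc1.
by rewrite !(connect_darcS (subsetUr _ _) (subsetUr _ _)) ?sc2.
Qed.

Lemma uconnectedU S1 S2 F1 F2 a : a \in S1 -> a \in S2 ->
  uconnected S1 F1 -> uconnected S2 F2 -> uconnected (S1 :|: S2) (F1 :|: F2).
Proof.
move=> aS1 aS2 /uconnectedP uc1 /uconnectedP uc2.
apply: (uconnected_hub (c := a)) => x; rewrite inE => /orP[xS | xS].
  by rewrite (connect_uarcS (subsetUl _ _) (subsetUl _ _)) ?uc1.
by rewrite (connect_uarcS (subsetUr _ _) (subsetUr _ _)) ?uc2.
Qed.

(* Whichever vertex [z] is removed, one of [a], [b] survives to glue the two sides. *)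
Lemma biconnectedU S1 S2 F1 F2 a b : a != b ->
  a \in S1 -> b \in S1 -> a \in S2 -> b \in S2 ->
  biconnected S1 F1 -> biconnected S2 F2 -> biconnected (S1 :|: S2) (F1 :|: F2).
Proof.
move=> ab aS1 bS1 aS2 bS2 bc1 bc2.
have [_ uc1 _] := and3P bc1; have [_ uc2 _] := and3P bc2.
apply/and3P; split; first by apply/set0Pn; exists a; rewrite inE aS1.
  exact: uconnectedU aS1 aS2 uc1 uc2.
apply/forall_inP => z _; rewrite setDUl.
have [c [cz cS1 cS2]] : exists c, [/\ c != z, c \in S1 & c \in S2].
  by case: (eqVneq a z) => [<-|]; [exists b; rewrite eq_sym | exists a].
apply: (uconnectedU (a := c)); rewrite ?inE ?cz ?cS1 ?cS2 //;
exact: biconnected_uconnectedD1.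
Qed.

Lemma strongly_biconnectedU S1 S2 F1 F2 a b : a != b ->
  a \in S1 -> b \in S1 -> a \in S2 -> b \in S2 ->
  strongly_biconnected S1 F1 -> strongly_biconnected S2 F2 ->
  strongly_biconnected (S1 :|: S2) (F1 :|: F2).
Proof.
move=> ab aS1 bS1 aS2 bS2 /andP[sc1 bc1] /andP[sc2 bc2].
by rewrite /strongly_biconnected (strongly_connectedU aS1 aS2) ?(biconnectedU ab).
Qed.

Definition induced F S : {set T * T} := [set e in F | (e.1 \in S) && (e.2 \in S)].

Lemma induced_subgraph F S : is_subgraph F S (induced F S).
Proof.
apply/andP; split; first by apply/subsetP => e; rewrite inE => /andP[].
by apply/forall_inP => e; rewrite inE => /andP[].
Qed.

Lemma path_induced S' S F x p : S' \subset S -> all [in S'] (x :: p) ->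
  path (darc setT F) x p -> path (darc S' (induced F S)) x p.
Proof.
move=> sS; apply: sub_in_path => a b aS bS; rewrite /darc !inE /= aS bS /=.
by move=> xyF; rewrite xyF (subsetP sS a aS) (subsetP sS b bS).
Qed.

Lemma cycle_strongly_biconnected F c : uniq c -> cycle (darc setT F) c ->
  c != [::] -> strongly_biconnected [set x in c] (induced F [set x in c]).
Proof.
move=> uc ec c0; set S := [set x in c].
have sc : strongly_connected S (induced F S).
  apply/strongly_connectedP => x y; rewrite !inE => xc yc.
  have [s [exs c_xs _]] := cycle_rot_to ec xc.
  apply: (path_connect (path_induced (subxx S) _ exs)); last by rewrite -c_xs.
  by apply/allP => u; rewrite -c_xs inE.
apply/andP; split=> //; apply/and3P; split.
- by case: c c0 @S {uc ec sc} => // x c _; apply/set0Pn; exists x; rewrite inE mem_head.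
- exact: strongly_connected_uconnected.
apply/forall_inP => z; rewrite inE => zc.
have [s [ezs c_zs u_zs]] := cycle_rot_to ec zc.
have /andP[zNs _] : uniq (z :: s) by rewrite -u_zs.
case: s ezs c_zs zNs {u_zs} => [|y s] ezs c_zs zNs.
  by apply/uconnectedP => u v; rewrite !inE c_zs inE => /andP[/negbTE->].
apply: (uconnected_hub (c := y)) => u; rewrite !inE c_zs inE => /andP[/negbTE-> /= us].
apply/connect_darc_uarc/(path_connect _ us).
have /andP[_ eys] := ezs; apply: path_induced (subsetDl S [set z]) _ eys.
apply/allP => t ts; rewrite !inE c_zs inE ts orbT andbT.
by apply: contraNneq zNs => <-.
Qed.

Lemma strongly_biconnected_set1 F x : strongly_biconnected [set x] F.
Proof.
have sc : strongly_connected [set x] F.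
  by apply: (strongly_connected_hub (c := x)) => y /set1P ->; rewrite connect0.
rewrite /strongly_biconnected sc /biconnected strongly_connected_uconnected //.
have -> : [set x] != set0 by apply/set0Pn; exists x; rewrite set11.
apply/forall_inP => z /set1P ->; rewrite setDv.
by apply/uconnectedP => u v; rewrite inE.
Qed.

Lemma is_subgraphU E S1 S2 F1 F2 : is_subgraph E S1 F1 -> is_subgraph E S2 F2 ->
  is_subgraph E (S1 :|: S2) (F1 :|: F2).
Proof.
case/andP=> sF1 /forall_inP ends1 /andP[sF2 /forall_inP ends2].
rewrite /is_subgraph subUset sF1 sF2; apply/forall_inP => e.
by rewrite inE => /orP[/ends1|/ends2] /andP[x y]; rewrite !inE x y ?orbT.
Qed.

Lemma is_subgraphS E E' S F : E \subset E' -> is_subgraph E S F -> is_subgraph E' S F.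
Proof. by move=> sE /andP[sF ends]; rewrite /is_subgraph (subset_trans sF sE). Qed.

Lemma sbcsP E p : reflect
  [/\ is_subgraph E p.1 p.2, strongly_biconnected p.1 p.2 &
      forall S F, is_subgraph E S F -> strongly_biconnected S F ->
        p.1 \subset S -> p.2 \subset F -> (S, F) = p]
  (p \in sbcs E).
Proof.
rewrite inE; apply: (iffP and3P) => -[sg sb max]; split=> //.
  move=> S F sgS sbS s1 s2; apply/eqP.
  by move/forallP: max => /(_ S)/forallP/(_ F)/implyP; apply; rewrite sgS sbS s1 s2.
apply/forallP => S; apply/forallP => F; apply/implyP => /and4P[sgS sbS s1 s2].
exact/eqP/max.
Qed.

(* A strongly biconnected subgraph of maximal total size above [(S, F)] is maximal. *)
Lemma sbc_ext E S F : is_subgraph E S F -> strongly_biconnected S F ->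
  exists2 K, K \in sbcs E & (S \subset K.1) && (F \subset K.2).
Proof.
move=> sg sb; pose P q := [&& is_subgraph E q.1 q.2, strongly_biconnected q.1 q.2,
  S \subset q.1 & F \subset q.2].
have P0 : P (S, F) by rewrite /P sg sb !subxx.
case: (arg_maxnP (fun q : {set T} * {set T * T} => #|q.1| + #|q.2|) P0).
move=> [S1 F1] /and4P[/= sg1 sb1 sS1 sF1] max1.
exists (S1, F1); last by rewrite /= sS1 sF1.
apply/sbcsP; split=> // S' F' sg' sb' /= s1 s2.
have := max1 (S', F'); rewrite /P sg' sb' (subset_trans sS1 s1) (subset_trans sF1 s2).
move=> /(_ isT) /= le; have c1 := subset_leq_card s1; have c2 := subset_leq_card s2.
have /eqP -> : S1 == S'.
  by rewrite eqEcard s1 -(leq_add2r #|F'|) (leq_trans le) ?leq_add2l.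
have /eqP -> // : F1 == F'.
by rewrite eqEcard s2 -(leq_add2l #|S'|) (leq_trans le) ?leq_add2r.
Qed.

Lemma sbc_absorb E p S F a b : p \in sbcs E ->
  is_subgraph E S F -> strongly_biconnected S F -> a != b ->
  a \in p.1 -> b \in p.1 -> a \in S -> b \in S -> (S \subset p.1) && (F \subset p.2).
Proof.
case/sbcsP=> sgp sbp maxp sg sb ab ap bp aS bS.
have := maxp _ _ (is_subgraphU sgp sg) (strongly_biconnectedU ab ap bp aS bS sbp sb).
move=> /(_ (subsetUl _ _) (subsetUl _ _)) e.
by apply/andP; split; apply/setUidPl; [exact: (congr1 fst e) | exact: (congr1 snd e)].
Qed.

Lemma sbc_eq E p q a b : p \in sbcs E -> q \in sbcs E -> a != b ->
  a \in p.1 -> b \in p.1 -> a \in q.1 -> b \in q.1 -> p = q.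
Proof.
move=> pE qE ab ap bp aq bq; have /sbcsP[sgq sbq maxq] := qE.
have /andP[qp1 qp2] := sbc_absorb pE sgq sbq ab ap bp aq bq.
have /sbcsP[sgp sbp _] := pE.
by rewrite -(maxq _ _ sgp sbp qp1 qp2) -surjective_pairing.
Qed.

Lemma sbcs_restrict E E' p : E \subset E' -> p \in sbcs E' ->
  is_subgraph E p.1 p.2 -> p \in sbcs E.
Proof.
move=> sE /sbcsP[_ sb max] sg; apply/sbcsP; split=> // S F sgS.
exact/max/(is_subgraphS sE).
Qed.

Lemma same_sbc_refl E x : same_sbc E x x.
Proof.
have sg : is_subgraph E [set x] set0.
  by rewrite /is_subgraph sub0set; apply/forall_inP => e; rewrite in_set0.
have [K KE /andP[xK _]] := sbc_ext sg (strongly_biconnected_set1 set0 x).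
by apply/exists_inP; exists K; rewrite // andbb (subsetP xK) ?set11.
Qed.

Lemma sbc_edge E a b : strongly_connected setT E -> (a, b) \in E ->
  exists2 K, K \in sbcs E & (a \in K.1) && (b \in K.1).
Proof.
move=> /strongly_connectedP scE abE.
have [p [bp up lastp]] := connect_uniq_path (scE b a (in_setT b) (in_setT a)).
have cyc : cycle (darc setT E) (b :: p) by rewrite /= rcons_path bp lastp darcT.
have [K KE /andP[pK _]] :=
  sbc_ext (induced_subgraph E _) (cycle_strongly_biconnected up cyc isT).
by exists K; rewrite // !(subsetP pK) // inE ?mem_head // -lastp mem_last.
Qed.

Lemma sbc_edge_lost E E' S F a b : strongly_connected setT E ->
  is_subgraph E' S F -> strongly_biconnected S F ->
  {in sbcs E, forall K : {set T} * {set T * T}, ~~ (S \subset K.1)} ->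
  (a, b) \in E -> a != b -> a \in S -> b \in S ->
  exists2 K, K \in sbcs E :\: sbcs E' & (a \in K.1) && (b \in K.1).
Proof.
move=> scE sg sb SNK abE ab aS bS; have [K KE /andP[aK bK]] := sbc_edge scE abE.
exists K; rewrite ?aK ?bK // in_setD KE andbT.
by apply: contra (SNK K KE) => KE'; case/andP: (sbc_absorb KE' sg sb ab aK bK aS bS).
Qed.

(* A component of [(v, w) |: U] avoiding [(v, w)] is one of [U], and at most
   one component contains [(v, w)]. *)
Lemma card_sbcs_setU1 (U : {set T * T}) v w K1 K2 : v != w -> K1 != K2 ->
  K1 \in sbcs U :\: sbcs ((v, w) |: U) -> K2 \in sbcs U :\: sbcs ((v, w) |: U) ->
  #|sbcs ((v, w) |: U)| < #|sbcs U|.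
Proof.
move=> vw K12 K1U K2U; set U' := (v, w) |: U.
set X := [set t in sbcs U' | (v, w) \in t.2].
have old : sbcs U' :\: X \subset sbcs U :\: [set K1; K2].
  apply/subsetP => t; rewrite in_setD [t \in X]inE => /andP[+ tU'].
  rewrite tU' /= => vwNt; rewrite in_setD in_set2; apply/andP; split.
    by apply/negP => /orP[]/eqP eq; [move: K1U | move: K2U]; rewrite -eq in_setD tU'.
  have /sbcsP[/andP[sU' ends] _ _] := tU'.
  apply: (sbcs_restrict (subsetUr _ _) tU'); rewrite /is_subgraph ends andbT.
  apply/subsetP => e et; move: (subsetP sU' e et); rewrite in_setU1 => /orP[/eqP ee|//].
  by move: vwNt; rewrite -ee et.
have X1 : #|X| <= 1.
  apply/card_le1_eqP => p q; rewrite [p \in X]inE [q \in X]inE.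
  move=> /andP[pU' vwp] /andP[qU' vwq].
  have /sbcsP[/andP[_ /forall_inP endsp] _ _] := pU'.
  have /sbcsP[/andP[_ /forall_inP endsq] _ _] := qU'.
  have /andP[vp wp] := endsp _ vwp; have /andP[vq wq] := endsq _ vwq.
  exact: sbc_eq qU' pU' vw vq wq vp wp.
have K12U : [set K1; K2] \subset sbcs U.
  by move: K1U K2U; rewrite subUset !sub1set !in_setD => /andP[_ ->] /andP[_ ->].
have := cardsID X (sbcs U'); have := cardsD (sbcs U) [set K1; K2].
rewrite (setIidPr K12U) cards2 K12.
have := subset_leq_card old; have := subset_leq_card (subsetIr (sbcs U') X).
have := subset_leq_card K12U; rewrite cards2 K12.
lia.
Qed.

End Digraphs.

Unset Implicit Arguments.

Theorem mainTheorem1 (T : finType) (E U : {set T * T}) (v w : T) :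
  strongly_biconnected [set: T] E ->
  U \subset E ->
  strongly_connected [set: T] U ->
  ~ biconnected [set: T] U ->
  (v, w) \in E -> (v, w) \notin U ->
  ~ same_sbc U v w ->
  #|sbcs ((v, w) |: U)| < #|sbcs U|.
Proof.
move=> _ _ scU _ _ _ nsame; set U' := (v, w) |: U.
have vw : v != w by apply/eqP => vw; apply: nsame; rewrite vw same_sbc_refl.
have [r [wp up]] : exists r, path (darc setT U) w (rcons r v) /\ uniq (w :: rcons r v).
  apply: connect_uniq_path_rcons; first by rewrite eq_sym.
  by move/strongly_connectedP: scU; apply.
set C := [set u in w :: rcons r v].
have sbC : strongly_biconnected C (induced U' C).
  apply: cycle_strongly_biconnected up _ isT.
  rewrite /= rcons_path (sub_path (darcS (subxx _) (subsetUr _ U)) wp).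
  by rewrite last_rcons darcT !inE eqxx.
have CNK : {in sbcs U, forall K : {set T} * {set T * T}, ~~ (C \subset K.1)}.
  move=> K KU; apply: contra_notN nsame => CK; apply/exists_inP; exists K => //.
  by rewrite !(subsetP CK) // !(inE, mem_rcons, eqxx, orbT).
have [] := uniq_path_rcons_ends wp up; rewrite !darcT => wy_U wy xv_U xv.
have [wC yC] : w \in C /\ head v r \in C.
  by rewrite !inE eqxx; case: (r) => [|? ?]; rewrite !inE eqxx ?orbT.
have [xC vC] : last w r \in C /\ v \in C.
  by rewrite !in_set -rcons_cons !mem_rcons mem_head in_cons mem_last orbT.
have lost := sbc_edge_lost scU (induced_subgraph U' C) sbC CNK.
have [K1 K1U /andP[wK1 _]] := lost _ _ wy_U wy wC yC.
have [K2 K2U /andP[_ vK2]] := lost _ _ xv_U xv xC vC.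
have K12 : K1 != K2.
  apply: contra_notN nsame => /eqP K12; apply/exists_inP.
  by exists K1; [case/setDP: K1U | rewrite wK1 K12 vK2].
exact: card_sbcs_setU1 vw K12 K1U K2U.
Qed.
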